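(* There exist an environment $E$ and a total preorder $\succeq$ on $\Pi^E$ such that $\succeq\in\mathrm{Ord}_{\mathrm{MR}}(E)\cap\mathrm{Ord}_{\mathrm{LTL}}(E)$ but $\succeq\notin\mathrm{Ord}_{\mathrm{LAR}}(E)$.
   Context: An environment is a tuple $E=(\mathcal S,\mathcal A,\mathcal T,\mathcal I)$ where $\mathcal S,\mathcal A$ are finite nonempty sets, $\mathcal T:\mathcal S\times\mathcal A\to\Delta(\mathcal S)$ and $\mathcal I\in\Delta(\mathcal S)$. A policy is a map $\pi:\mathcal S\to\Delta(\mathcal A)$ (stationary, possibly stochastic); $\Pi^E$ denotes the set of all policies. A trajectory $\xi=(s_0,a_0,s_1,a_1,\dots)\in\Xi:=\mathcal S\times(\mathcal A\times\mathcal S)^\omega$ is generated under $\pi$ by $s_0\sim\mathcal I$, $a_t\sim\pi(s_t)$, $s_{t+1}\sim\mathcal T(s_t,a_t)$; $\mathbb E^\pi_\xi$ denotes expectation under this distribution. An objective-specification formalism $X$ assigns to each environment $E$ a set of objective specifications, each inducing a total preorder $\succeq$ on $\Pi^E$; $\mathrm{Ord}_X(E)$ is the set of total preorders so induced. A specification defining a scalar $J:\Pi^E\to\mathbb R$ induces $\pi_1\succeq\pi_2\iff J(\pi_1)\ge J(\pi_2)$. MR: specification $(\mathcal R,\gamma)$, $\mathcal R:\mathcal S\times\mathcal A\times\mathcal S\to\mathbb R$, $\gamma\in[0,1)$, $J(\pi)=\mathbb E^\pi_\xi[\sum_{t=0}^\infty\gamma^t\mathcal R(s_t,a_t,s_{t+1})]$.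 LAR: specification $(\mathcal R)$, $\mathcal R:\mathcal S\times\mathcal A\times\mathcal S\to\mathbb R$, $J(\pi)=\lim_{N\to\infty}\frac1N\mathbb E^\pi_\xi[\sum_{t=0}^{N-1}\mathcal R(s_t,a_t,s_{t+1})]$. LTL: specification $(\varphi)$ with $\varphi$ a linear temporal logic formula whose atomic propositions are the transitions $(s,a,s')\in\mathcal S\times\mathcal A\times\mathcal S$, built with $\neg,\lor,\land,\to$ and the temporal operators $\bigcirc$ (next), $\square$ (always), $\lozenge$ (eventually), $\mathcal U$ (until). Semantics on a trajectory $\xi$ at time $t$: an atomic proposition $(s,a,s')$ holds iff $(s_t,a_t,s_{t+1})=(s,a,s')$; $\bigcirc\psi$ holds iff $\psi$ holds at $t+1$; $\square\psi$ iff $\psi$ holds at every $t'\ge t$; $\lozenge\psi$ iff $\psi$ holds at some $t'\ge t$; $\psi\,\mathcal U\,\chi$ iff there is $t'\ge t$ with $\chi$ holding at $t'$ and $\psi$ holding at every $t''$ with $t\le t''<t'$; Boolean connectives as usual. $\varphi(\xi)=1$ if $\varphi$ holds at time $0$ and $0$ otherwise; $J(\pi)=\mathbb E^\pi_\xi[\varphi(\xi)]$. *)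

From HB Require Import structures.
From mathcomp Require Import all_boot all_order all_algebra.
From mathcomp Require Import all_classical all_reals all_analysis.
Set Implicit Arguments. Unset Strict Implicit. Unset Printing Implicit Defensive.
Import Order.TTheory GRing.Theory Num.Theory numFieldNormedType.Exports.
Local Open Scope ring_scope.
Local Open Scope classical_set_scope.

Section Defs.
Variable R : realType.

Definition is_dist (T : finType) (p : T -> R) : Prop :=
  (forall x, 0 <= p x) /\ \sum_(x : T) p x = 1.

Record env := Env {
  St : finType;
  Ac : finType;
  St_nonempty : (0 < #|St|)%N;
  Ac_nonempty : (0 < #|Ac|)%N;
  Tr : St -> Ac -> St -> R;
  Tr_dist : forall s a, is_dist (Tr s a);
  Init : St -> R;
  Init_dist : is_dist Init }.

Record policy (E : env) := Policy {
  pol : St E -> Ac E -> R;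
  pol_dist : forall s, is_dist (pol s) }.

(* Infinite trajectories xi = (s_0,a_0,s_1,a_1,...) represented as
   the sequence of state-action pairs t |-> (s_t, a_t). *)
Definition traj (E : env) := nat -> (St E * Ac E)%type.

Section Prob.
Variables (E : env) (pi : policy E).

Fixpoint pp_from (x : St E * Ac E) (r : seq (St E * Ac E)) : R :=
  match r with
  | [::] => 1
  | y :: r' => Tr x.1 x.2 y.1 * pol pi y.1 y.2 * pp_from y r'
  end.

Definition prefix_prob (w : seq (St E * Ac E)) : R :=
  match w with
  | [::] => 1
  | x :: r => Init x.1 * pol pi x.1 x.2 * pp_from x r
  end.

(* E^pi[ R(s_t, a_t, s_{t+1}) ], computed from the law of the prefix of
   length t+2. *)
Definition exp_reward (Rw : St E -> Ac E -> St E -> R) (t : nat) : R :=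
  \sum_(w : (t.+2).-tuple (St E * Ac E))
     prefix_prob w *
     Rw (tnth w (inord t)).1 (tnth w (inord t)).2 (tnth w (inord t.+1)).1.

Definition cylinder (w : seq (St E * Ac E)) : set (traj E) :=
  [set xi | forall i, (i < size w)%N -> xi i = nth (xi i) w i].

Definition ocyl (c : option (seq (St E * Ac E))) : set (traj E) :=
  if c is Some w then cylinder w else set0.
Definition ocyl_prob (c : option (seq (St E * Ac E))) : R :=
  if c is Some w then prefix_prob w else 0.

(* The trajectory law P^pi on measurable sets is given by the Caratheodory
   outer measure generated by the cylinder premeasure (Ionescu-Tulcea). *)
Definition traj_outer (X : set (traj E)) : \bar R :=
  ereal_inf [set (\sum_(n <oo) (ocyl_prob (c n))%:E)%E |
             c in [set c : nat -> option (seq (St E * Ac E)) |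
                     X `<=` \bigcup_n ocyl (c n)]].
End Prob.

(* Markovian rewards: J(pi) = E[sum_t gamma^t R(s_t,a_t,s_{t+1})]
   = sum_t gamma^t E[R(s_t,a_t,s_{t+1})]  (bounded rewards, gamma < 1). *)
Definition J_MR (E : env) (Rw : St E -> Ac E -> St E -> R) (gamma : R)
  (pi : policy E) : R :=
  limn (series (fun t => gamma ^+ t * exp_reward pi Rw t)).

Definition J_LAR (E : env) (Rw : St E -> Ac E -> St E -> R)
  (pi : policy E) : R :=
  limn (fun N => N%:R^-1 * \sum_(t < N) exp_reward pi Rw t).

Inductive ltl (S A : Type) : Type :=
  | LAtom : S -> A -> S -> ltl S A
  | LNot : ltl S A -> ltl S A
  | LOr : ltl S A -> ltl S A -> ltl S A
  | LAnd : ltl S A -> ltl S A -> ltl S A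
  | LImp : ltl S A -> ltl S A -> ltl S A
  | LNext : ltl S A -> ltl S A
  | LAlways : ltl S A -> ltl S A
  | LEventually : ltl S A -> ltl S A
  | LUntil : ltl S A -> ltl S A -> ltl S A.

Fixpoint ltl_holds (E : env) (xi : traj E) (t : nat)
  (phi : ltl (St E) (Ac E)) : Prop :=
  match phi with
  | LAtom s a s' => (xi t).1 = s /\ (xi t).2 = a /\ (xi t.+1).1 = s'
  | LNot p => ~ ltl_holds xi t p
  | LOr p q => ltl_holds xi t p \/ ltl_holds xi t q
  | LAnd p q => ltl_holds xi t p /\ ltl_holds xi t q
  | LImp p q => ltl_holds xi t p -> ltl_holds xi t q
  | LNext p => ltl_holds xi t.+1 p
  | LAlways p => forall t', (t <= t')%N -> ltl_holds xi t' p
  | LEventually p => exists t', (t <= t')%N /\ ltl_holds xi t' p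
  | LUntil p q => exists t', (t <= t')%N /\ ltl_holds xi t' q /\
                    forall t'', (t <= t'')%N -> (t'' < t')%N -> ltl_holds xi t'' p
  end.

Definition J_LTL (E : env) (phi : ltl (St E) (Ac E)) (pi : policy E) : R :=
  fine (traj_outer pi [set xi | ltl_holds xi 0 phi]).

Definition induced_by (E : env) (J : policy E -> R)
  (ord : policy E -> policy E -> Prop) : Prop :=
  forall p1 p2, ord p1 p2 <-> J p2 <= J p1.

Definition in_Ord_MR (E : env) (ord : policy E -> policy E -> Prop) : Prop :=
  exists (Rw : St E -> Ac E -> St E -> R) (gamma : R),
    0 <= gamma < 1 /\ induced_by (J_MR Rw gamma) ord.

Definition in_Ord_LAR (E : env) (ord : policy E -> policy E -> Prop) : Prop :=
  exists Rw : St E -> Ac E -> St E -> R, induced_by (J_LAR Rw) ord.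

Definition in_Ord_LTL (E : env) (ord : policy E -> policy E -> Prop) : Prop :=
  exists phi : ltl (St E) (Ac E), induced_by (J_LTL phi) ord.

Definition total_preorder (T : Type) (ord : T -> T -> Prop) : Prop :=
  (forall x y, ord x y \/ ord y x) /\
  (forall x y z, ord x y -> ord y z -> ord x z).

End Defs.

From mathcomp Require Import all_boot all_order all_algebra.
From mathcomp Require Import all_classical all_reals all_analysis.
From mathcomp Require Import ring.
Set Implicit Arguments. Unset Strict Implicit. Unset Printing Implicit Defensive.
Import Order.TTheory GRing.Theory Num.Theory numFieldNormedType.Exports.

(* The policies [always_true] and [act_state] of [transient_env] differ only in
   the start state, which is left for good after time 0; swapping the first action
   shows that they induce the same law of the trajectory from time 1 on.  Limit
   averages forget time 0, so no limit-average reward separates them, whereas the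
   order by the probability of playing [true] at the start is induced both by a
   reward paid at time 0 with discount 0 and by an LTL formula about the first
   transition.  Evaluating that formula requires the outer measure of a cylinder,
   which equals its prefix probability by a Koenig-style compactness argument. *)

Local Open Scope ring_scope.
Local Open Scope classical_set_scope.

Lemma big_tuple_cons (V : nmodType) (T : finType) n (F : n.+1.-tuple T -> V) :
  \sum_w F w = \sum_x \sum_(t : n.-tuple T) F [tuple of x :: t].
Proof.
rewrite pair_big (reindex (fun p : T * n.-tuple T => [tuple of p.1 :: p.2])) //=.
exists (fun w => (thead w, [tuple of behead w])) => [[x t] _ | w _].
  by congr pair; apply: val_inj.
by rewrite -tuple_eta.
Qed.

Lemma exists_rcons_chain (T : Type) (x0 : T) (Q : seq T -> Prop) w :
  Q w -> (forall u, Q u -> exists y, Q (rcons u y)) ->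
  exists xi : nat -> T,
    mkseq xi (size w) = w /\ forall k, (size w <= k)%N -> Q (mkseq xi k).
Proof.
move=> Qw Qext.
have [f Qf] : {f : seq T -> T & forall u, Q u -> Q (rcons u (f u))}.
  apply: (boolp.choice (P := fun u y => Q u -> Q (rcons u y))) => u.
  by case: (pselect (Q u)) => [/Qext [y Qy] | nQu]; [exists y | exists x0].
pose U k := iter k (fun u => rcons u (f u)) w.
pose xi i := if (i < size w)%N then nth x0 w i else f (U (i - size w)%N).
have xiU k : mkseq xi (size w + k) = U k.
  elim: k => [|k IH].
    rewrite addn0 -[RHS](mkseq_nth x0); apply/eq_in_map => i.
    by rewrite mem_iota /xi => /andP [_ ->].
  by rewrite addnS mkseqS IH /xi ltnNge leq_addr /= addKn.
exists xi; split; first by rewrite -(addn0 (size w)) xiU.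
move=> k /subnKC <-; rewrite xiU.
by elim: (k - size w)%N => [|j IH] //=; apply: Qf.
Qed.

Lemma prefix_mkseq (T : eqType) (xi : nat -> T) m n :
  (m <= n)%N -> prefix (mkseq xi m) (mkseq xi n).
Proof.
move=> mn; rewrite prefixE size_mkseq /mkseq -map_take take_iota.
by rewrite (minn_idPl mn).
Qed.

Section PrefixProbability.
Variables (R : realType) (E : env R) (pi : policy E).
Local Notation T := (St E * Ac E)%type.
Local Notation P := (prefix_prob pi).

Lemma sum_pol (f : St E -> R) : \sum_(y : T) f y.1 * pol pi y.1 y.2 = \sum_s f s.
Proof.
rewrite -(pair_big xpredT xpredT (fun s a => f s * pol pi s a)) /=.
by apply: eq_bigr => s _; rewrite -mulr_sumr (pol_dist pi s).2 mulr1.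
Qed.

Definition next_prob (u : seq T) (y : T) : R :=
  let d := if u is x :: r then Tr (last x r).1 (last x r).2 else @Init R E in
  d y.1 * pol pi y.1 y.2.

Lemma prefix_prob_rcons u y : P (rcons u y) = P u * next_prob u y.
Proof.
case: u => [|x r] /=; first by rewrite mulr1 mul1r.
suff -> : forall x, pp_from pi x (rcons r y) =
    pp_from pi x r * (Tr (last x r).1 (last x r).2 y.1 * pol pi y.1 y.2).
  by rewrite !mulrA.
elim: r {x} => [|z r IH] x /=; first by rewrite mulr1 mul1r.
by rewrite IH !mulrA.
Qed.

Lemma next_prob_ge0 u y : 0 <= next_prob u y.
Proof.
apply: mulr_ge0; last exact: (pol_dist pi _).1.
by case: u => [|x r]; [apply: (Init_dist E).1 | apply: (Tr_dist _ _).1].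
Qed.

Lemma sum_next_prob u : \sum_y next_prob u y = 1.
Proof.
rewrite sum_pol.
by case: u => [|x r]; [apply: (Init_dist E).2 | apply: (Tr_dist _ _).2].
Qed.

Lemma next_prob_le1 u y : next_prob u y <= 1.
Proof.
rewrite -(sum_next_prob u) (bigD1 y) //= lerDl.
by apply: sumr_ge0 => z _; apply: next_prob_ge0.
Qed.

Lemma prefix_prob_ge0 u : 0 <= P u.
Proof.
elim/last_ind: u => [|u y IH] //.
by rewrite prefix_prob_rcons mulr_ge0 // next_prob_ge0.
Qed.

Lemma prefix_prob_cat u s : P (u ++ s) <= P u.
Proof.
elim/last_ind: s => [|s y IH]; first by rewrite cats0.
rewrite -rcons_cat prefix_prob_rcons; apply: le_trans IH.
by rewrite ler_piMr ?prefix_prob_ge0 ?next_prob_le1.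
Qed.

Lemma sum_prefix_prob_rcons u : \sum_y P (rcons u y) = P u.
Proof.
under eq_bigr do rewrite prefix_prob_rcons.
by rewrite -mulr_sumr sum_next_prob mulr1.
Qed.

End PrefixProbability.

Lemma prefix_rcons_inv (T : eqType) (u v : seq T) y :
  prefix v (rcons u y) -> prefix v u \/ v = rcons u y.
Proof.
case/prefixP=> s; case/lastP: s => [|s z]; first by rewrite cats0; right.
by rewrite -rcons_cat => /rcons_inj [-> _]; left; apply: prefix_prefix.
Qed.

Lemma cylinderE (R : realType) (E : env R) (w : seq (St E * Ac E)) (xi : traj E) :
  cylinder w xi <-> mkseq xi (size w) = w.
Proof.
split=> [xiw | <- i]; last by rewrite size_mkseq => lti; rewrite nth_mkseq.
apply: (@eq_from_nth _ (xi 0%N)); rewrite size_mkseq // => i lti.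
by rewrite nth_mkseq // xiw // (set_nth_default (xi 0%N)).
Qed.

Section CylinderMass.
Variables (R : realType) (E : env R) (pi : policy E).
Local Notation T := (St E * Ac E)%type.
Local Notation P := (prefix_prob pi).

(* The probability of [cylinder u `&` cylinder v]. *)
Definition cyl_meet (u v : seq T) : R :=
  if prefix v u then P u else if prefix u v then P v else 0.

Lemma cyl_meet_ge0 u v : 0 <= cyl_meet u v.
Proof. by rewrite /cyl_meet; do 2?case: ifP => _; rewrite ?prefix_prob_ge0. Qed.

Lemma cyl_meet_le u v : cyl_meet u v <= P v.
Proof.
rewrite /cyl_meet; case: ifP => [/prefixP [s ->]|_]; first exact: prefix_prob_cat.
by case: ifP => _; rewrite ?prefix_prob_ge0.
Qed.

Lemma sum_cyl_meet_rcons u v : \sum_y cyl_meet (rcons u y) v = cyl_meet u v.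
Proof.
have [vu | vNu] := boolP (prefix v u).
  have vuy y : prefix v (rcons u y) := prefix_trans vu (prefix_rcons u y).
  rewrite /cyl_meet vu; under eq_bigr do rewrite vuy.
  exact: sum_prefix_prob_rcons.
have [uv | uNv] := boolP (prefix u v); last first.
  rewrite /cyl_meet (negbTE vNu) (negbTE uNv) big1 // => y _.
  case: ifP => [/prefix_rcons_inv [vu | vE] | _].
  - by rewrite vu in vNu.
  - by move: uNv; rewrite vE prefix_rcons.
  by case: ifP => // /(prefix_trans (prefix_rcons u y)); rewrite (negbTE uNv).
case/prefixP: uv vNu => -[|z s] ->; first by rewrite cats0 prefix_refl.
move=> vNu; have uy_v y : prefix (rcons u y) (u ++ z :: s) = (y == z).
  by rewrite -cats1 prefix_catr // eqxx prefix_cons prefix0s andbT.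
have meetE y :
    cyl_meet (rcons u y) (u ++ z :: s) = if y == z then P (u ++ z :: s) else 0.
  rewrite /cyl_meet uy_v; case: ifP => [/prefix_rcons_inv [vu | vE] | _ //].
    by rewrite vu in vNu.
  by rewrite -uy_v -vE prefix_refl.
under eq_bigr do rewrite meetE.
by rewrite -big_mkcond big_pred1_eq /cyl_meet (negbTE vNu) prefix_prefix.
Qed.
End CylinderMass.

Section OuterMeasureOfCylinders.
Variables (R : realType) (E : env R) (pi : policy E).
Local Notation T := (St E * Ac E)%type.
Local Notation P := (prefix_prob pi).
Variable c : nat -> option (seq T).

Definition ocyl_meet u (o : option (seq T)) : R :=
  if o is Some v then cyl_meet pi u v else 0.

Lemma ocyl_meet_ge0 u o : 0 <= ocyl_meet u o.
Proof. by case: o => [v|] //=; apply: cyl_meet_ge0. Qed.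

Local Open Scope ereal_scope.

(* The mass that the cover [c] puts on [cylinder u]. *)
Definition cover_mass u : \bar R := \sum_(n <oo) (ocyl_meet u (c n))%:E.

Lemma sum_cover_mass_rcons u : \sum_y cover_mass (rcons u y) = cover_mass u.
Proof.
rewrite /cover_mass -nneseries_sum; last first.
  by move=> y n _; rewrite lee_fin ocyl_meet_ge0.
apply: eq_eseriesr => n _; rewrite sumEFin; congr (_%:E).
by case: (c n) => [v|] /=; [apply: sum_cyl_meet_rcons | apply: big1].
Qed.

Lemma cover_mass_ge u n : (ocyl_meet u (c n))%:E <= cover_mass u.
Proof.
have ge0 m : 0 <= (ocyl_meet u (c m))%:E by rewrite lee_fin ocyl_meet_ge0.
apply: le_trans (nneseries_lim_ge n.+1 (fun m _ _ => ge0 m)).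
by rewrite big_nat_recr //= leeDr // sume_ge0.
Qed.

Lemma cover_mass_deficit_rcons u : cover_mass u < (P u)%:E ->
  exists y, cover_mass (rcons u y) < (P (rcons u y))%:E.
Proof.
move=> deficit; apply/not_existsP => noext; move: deficit.
apply/negP; rewrite -leNgt -sum_prefix_prob_rcons -sum_cover_mass_rcons -sumEFin.
by apply: lee_sum => y _; rewrite leNgt; apply/negP/noext.
Qed.

(* Koenig's lemma: a cylinder with a deficit contains a trajectory all of whose
   long prefixes have a deficit, and such a trajectory escapes the cover. *)
Lemma prefix_prob_le_cover_mass w :
  cylinder w `<=` \bigcup_n ocyl (c n) -> (P w)%:E <= cover_mass w.
Proof.
move=> cover; rewrite leNgt; apply/negP => deficit.
have [s0 _] := card_gt0P (St_nonempty E).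
have [a0 _] := card_gt0P (Ac_nonempty E).
have [xi [xiw xi_deficit]] := exists_rcons_chain (s0, a0) deficit
  cover_mass_deficit_rcons.
have [n _] := cover xi (proj2 (cylinderE w xi) xiw).
case cn : (c n) => [v|] //= /cylinderE xiv.
set u := mkseq xi (size w + size v).
have vu : prefix v u by rewrite -xiv prefix_mkseq // leq_addl.
have := cover_mass_ge u n; rewrite cn /= /cyl_meet vu.
by rewrite leNgt xi_deficit ?leq_addr.
Qed.

End OuterMeasureOfCylinders.

Lemma traj_outer_cylinder (R : realType) (E : env R) (pi : policy E) w :
  traj_outer pi (cylinder w) = (prefix_prob pi w)%:E.
Proof.
apply/eqP; rewrite eq_le; apply/andP; split.
  pose c n : option (seq (St E * Ac E)) := if n is 0%N then Some w else None.
  have -> : (prefix_prob pi w)%:E = (\sum_(n <oo) (ocyl_prob pi (c n))%:E)%E.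
    rewrite (@nneseries_split _ _ 0 1) => [|[|n] _] //=; last first.
      by rewrite lee_fin prefix_prob_ge0.
    by rewrite big_nat1 eseries0 ?adde0 // => -[|n].
  by apply: ereal_inf_lbound; exists c => // xi wxi; exists 0%N.
apply: le_ereal_inf_tmp => _ [c cover <-].
apply: le_trans (prefix_prob_le_cover_mass pi cover) _.
apply: lee_nneseries => [n _ _|n _]; first by rewrite lee_fin ocyl_meet_ge0.
by rewrite lee_fin; case: (c n) => [v|] //=; apply: cyl_meet_le.
Qed.

Lemma exp_reward0 (R : realType) (E : env R) (pi : policy E) Rw :
  exp_reward pi Rw 0 =
  \sum_s \sum_a Init s * pol pi s a * \sum_s' Tr s a s' * Rw s a s'.
Proof.
rewrite /exp_reward pair_bigA big_tuple_cons; apply: eq_bigr => x _.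
rewrite big_tuple_cons mulr_sumr -(sum_pol pi); apply: eq_bigr => y _.
rewrite (big_pred1 [tuple]) => [|t]; last by rewrite [t]tuple0 /= eqxx.
rewrite !(tnth_nth x) /= !inordK //=; ring.
Qed.

Lemma J_MR0 (R : realType) (E : env R) Rw (pi : policy E) :
  J_MR Rw 0 pi = exp_reward pi Rw 0.
Proof.
apply: norm_lim_near_cst; exists 1%N => // -[//|n] _.
rewrite /series /= big_nat_recl // expr0 mul1r big1 ?addr0 // => i _.
by rewrite expr0n mul0r.
Qed.

Lemma cesaro_lim_eq (R : realType) (u v : nat -> R) :
  (forall t, u t.+1 = v t.+1) ->
  limn (fun N => N%:R^-1 * \sum_(t < N) u t) =
  limn (fun N => N%:R^-1 * \sum_(t < N) v t).
Proof.
move=> uvS; set U := fun N => _; set V := fun N => _.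
pose d N := (u 0%N - v 0%N) * N%:R^-1.
have UVd : U = V + d.
  apply: funext => N; suff -> : U N = V N + d N by [].
  case: N => [|N]; first by rewrite /U /V /d /= !big_ord0 !invr0 !mulr0 addr0.
  rewrite /U /V /d /= !big_ord_recl; under eq_bigr do rewrite uvS; ring.
have d0 : d @ \oo --> (0 : R).
  rewrite -[X in _ --> X](mulr0 (u 0%N - v 0%N)); apply: cvgMl_tmp.
  by rewrite -cvg_shiftS; apply: cvg_harmonic.
rewrite /lim /lim_in; congr get; apply: funext => l; apply: propext.
split=> [cvgU | cvgV]; last by rewrite UVd -[l]addr0; apply: cvgD.
by rewrite -(addrK d V) -UVd -[l]subr0; apply: cvgB.
Qed.

Lemma J_LAR_eq (R : realType) (E : env R) Rw (pi1 pi2 : policy E) :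
  (forall t, exp_reward pi1 Rw t.+1 = exp_reward pi2 Rw t.+1) ->
  J_LAR Rw pi1 = J_LAR Rw pi2.
Proof. exact: cesaro_lim_eq. Qed.

Section TransientStart.
Variable R : realType.

Lemma is_dist_pred1 (T : finType) (x0 : T) : is_dist (fun x => (x == x0)%:R : R).
Proof.
split=> [x|]; first exact: ler0n.
by rewrite (bigD1 x0) //= eqxx big1 ?addr0 // => x /negbTE ->.
Qed.

Definition det_policy (E : env R) (f : St E -> Ac E) : policy E :=
  @Policy R E (fun s a => (a == f s)%:R) (fun s => is_dist_pred1 (f s)).

Lemma card_bool_gt0 : (0 < #|{: bool}|)%N. Proof. by rewrite card_bool. Qed.

Definition transient_env : env R :=
  @Env R bool bool card_bool_gt0 card_bool_gt0
    (fun _ _ s' => (s' == true)%:R) (fun _ _ => is_dist_pred1 true)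
    (fun s => (s == false)%:R) (is_dist_pred1 false).

Local Notation St := (St transient_env).
Local Notation Ac := (Ac transient_env).

Definition always_true : policy transient_env :=
  @det_policy transient_env (fun _ => true).
Definition act_state : policy transient_env := @det_policy transient_env id.

Definition first_reward (s : St) (a : Ac) (_ : St) : R := (~~ s && a)%:R.

Lemma J_MR_first_reward (pi : policy transient_env) :
  J_MR first_reward 0 pi = pol pi false true.
Proof.
rewrite J_MR0 exp_reward0 /= !big_bool /= /first_reward /=; ring.
Qed.

Definition first_true : ltl St Ac :=
  LOr (LAtom (false : St) (true : Ac) false) (LAtom (false : St) (true : Ac) true).

Lemma J_LTL_first_true (pi : policy transient_env) :
  J_LTL first_true pi = pol pi false true.
Proof.
rewrite /J_LTL.
have -> : [set xi : traj transient_env | ltl_holds xi 0 first_true] =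
          cylinder [:: ((false : St), (true : Ac))].
  apply/seteqP; split=> xi /=.
    move=> holds [|i] //= _.
    by case: holds => -[+ []]; case: (xi 0%N) => s a /= -> ->.
  move/(_ 0%N isT) => /= ->; rewrite /=.
  by case: (xi 1%N).1; [right | left].
by rewrite traj_outer_cylinder /= mulr1 mul1r.
Qed.

Lemma pp_from_agree (q1 q2 : policy transient_env) x x' r :
  pol q1 true =1 pol q2 true -> pp_from q1 x r = pp_from q2 x' r.
Proof.
move=> q12; elim: r x x' => [|y r IH] x x' //=.
rewrite (IH y y); case: y => -[] a /=; last by rewrite !mul0r.
by rewrite q12.
Qed.

Definition flip_action (x : St * Ac) : St * Ac := (x.1, ~~ x.2).

Lemma flip_actionK : involutive flip_action.
Proof. by case=> s a; rewrite /flip_action negbK. Qed.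

Lemma prefix_prob_flip x r :
  prefix_prob always_true (flip_action x :: r) = prefix_prob act_state (x :: r).
Proof.
rewrite /= (@pp_from_agree always_true act_state _ x) //.
by case: x => -[] [] /=; rewrite ?mul0r.
Qed.

Lemma exp_reward_succ Rw t :
  exp_reward always_true Rw t.+1 = exp_reward act_state Rw t.+1.
Proof.
rewrite /exp_reward !big_tuple_cons (reindex_inj (inv_inj flip_actionK)).
apply: eq_bigr => x _; apply: eq_bigr => r _.
rewrite !(tnth_nth x) !inordK ?ltnS ?size_tuple //.
by congr (_ * _); first exact: prefix_prob_flip.
Qed.

End TransientStart.

Theorem mainTheorem9 (R : realType) :
  exists (E : env R) (ord : policy E -> policy E -> Prop),
    total_preorder ord /\
    in_Ord_MR ord /\ in_Ord_LTL ord /\ ~ in_Ord_LAR ord.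
Proof.
exists (transient_env R), (fun pi1 pi2 : policy (transient_env R) =>
  pol pi2 false true <= pol pi1 false true).
split.
  split=> [pi1 pi2 | pi1 pi2 pi3 le12 le23]; first exact/orP/le_total.
  exact: le_trans le23 le12.
split.
  exists (@first_reward R), 0; split; first by rewrite lexx ltr01.
  by move=> pi1 pi2; rewrite !J_MR_first_reward.
split; first by exists (first_true R) => pi1 pi2; rewrite !J_LTL_first_true.
move=> [Rw induced]; have := (induced (act_state R) (always_true R)).2.
by rewrite (J_LAR_eq (exp_reward_succ Rw)) lexx /= ler10 => /(_ isT).
Qed.
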